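(* Let $((G,k,d),X,\langle X_L,X_R\rangle)$ be an instance of \textsc{Annotated Contraction(vc)} such that $X_R$ is an independent set of $G$ and every edge of $G[X]$ has both endpoints in $X_L\cup X_R$. Let $F_1=E(X_L,X_R)$ be the set of edges with one endpoint in $X_L$ and the other in $X_R$, and let $F_2$ be the edge set of a spanning forest of $G[X_L]$. Let $G'=(G-F_1)/F_2$, $k'=k-|F_2|$, $d'=d-|F_2|$, let $X'$ be the image of $X$ in $G'$ (i.e. $V(G[X]/F_2)$) and $X'_L$ the image of $X_L$ in $G'$ (i.e. $V(G[X_L]/F_2)$). Then $((G,k,d),X,\langle X_L,X_R\rangle)$ is a Yes-instance if and only if $((G',k',d'),X',\langle X'_L,X_R\rangle)$ is a Yes-instance; moreover $X'$ is an independent set of $G'$.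
   Context: All graphs are finite, simple and undirected. $G-F$ denotes deletion of the edge set $F$; $G/F$ denotes contraction of all edges of $F$ (contracting $uv$ deletes $u,v$ and adds a new vertex adjacent to $(N(u)\cup N(v))\setminus\{u,v\}$, without loops or parallel edges). $\mathrm{rank}(H)$ is $|V(H)|$ minus the number of connected components of $H$, and $\mathrm{rank}(S):=\mathrm{rank}(G[S])$ for $S\subseteq V(G)$. An instance of \textsc{Annotated Contraction(vc)} consists of a graph $G$, integers $k,d$, a vertex cover $X$ of $G$ (in the paper, a minimum vertex cover), and disjoint subsets $X_L,X_R\subseteq X$; it is a Yes-instance iff there exist $X_s\subseteq X$ and $Y_s\subseteq V(G)\setminus X$ with (i) $(X\setminus X_s)\cup Y_s$ is a vertex cover of $G$, (ii) $\mathrm{rank}((X\setminus X_s)\cup Y_s)\ge k$, (iii) $|Y_s|-|X_s|\le k-d$, and (iv) $X_L\cap X_s=\emptyset$ and $X_R\subseteq X_s$. *)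

(* Simple graphs = symmetric irreflexive relations on a finType. *)
From mathcomp Require Import all_boot all_order all_algebra.
Set Implicit Arguments. Unset Strict Implicit. Unset Printing Implicit Defensive.
Import GRing.Theory Num.Theory.

Section Graphs.
Variable V : finType.

Definition edges (e : rel V) : {set {set V}} :=
  [set [set x; y] | x in [set: V], y in [set: V] & e x y].

Definition erel (F : {set {set V}}) : rel V := fun x y => [set x; y] \in F.

(* induced subgraph G[S] (vertices outside S are isolated) *)
Definition induced (e : rel V) (S : {set V}) : rel V :=
  fun x y => [&& x \in S, y \in S & e x y].

Definition ncomp (e : rel V) (S : {set V}) : nat :=
  #|[set [set y in S | connect (induced e S) x y] | x in S]|.

Definition rank (e : rel V) (S : {set V}) : int := (#|S|%:Z - (ncomp e S)%:Z)%R.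

Definition vertex_cover (e : rel V) (C : {set V}) : Prop :=
  forall x y, e x y -> (x \in C) || (y \in C).

Definition independent (e : rel V) (S : {set V}) : Prop :=
  forall x y, x \in S -> y \in S -> ~~ e x y.

(* F is (the edge set of) a spanning forest of the graph G[S]:
   F consists of edges of G[S], F is acyclic (no edge of F lies on a cycle of F,
   i.e. removing it disconnects its endpoints), and any two vertices connected
   in G[S] are connected in F. *)
Definition spanning_forest (e : rel V) (S : {set V}) (F : {set {set V}}) : Prop :=
  [/\ F \subset edges (induced e S),
      (forall x y, [set x; y] \in F -> ~~ connect (erel (F :\ [set x; y])) x y) &
      (forall x y, x \in S -> y \in S -> connect (induced e S) x y ->
         connect (erel F) x y)].

Definition edel (e : rel V) (F : {set {set V}}) : rel V :=
  fun x y => e x y && ([set x; y] \notin F).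

(* contraction of all edges of F: vertices are the classes of the
   equivalence generated by F; two distinct classes are adjacent iff
   some edge of G joins them *)
Definition cclass (F : {set {set V}}) (x : V) : {set V} :=
  [set y | connect (erel F) x y].

Definition qvert (F : {set {set V}}) :=
  {S : {set V} | [exists x, S == cclass F x]}.

Lemma qv_proof (F : {set {set V}}) (x : V) : [exists y, cclass F x == cclass F y].
Proof. by apply/existsP; exists x. Qed.

Definition qv (F : {set {set V}}) (x : V) : qvert F :=
  exist _ (cclass F x) (qv_proof F x).

Definition contr (e : rel V) (F : {set {set V}}) : rel (qvert F) :=
  fun S T => (val S != val T) &&
    [exists u, exists v, [&& u \in val S, v \in val T & e u v]].

End Graphs.

Arguments qv {V} F x.
Arguments contr {V} e F.


Definition yes_instance (V : finType) (e : rel V) (k d : int)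
    (X XL XR : {set V}) : Prop :=
  exists Xs Ys : {set V},
    Xs \subset X /\ Ys \subset ~: X /\
    vertex_cover e ((X :\: Xs) :|: Ys) /\
    (k <= rank e ((X :\: Xs) :|: Ys))%R /\
    (#|Ys|%:Z - #|Xs|%:Z <= k - d)%R /\
    [disjoint XL & Xs] /\ XR \subset Xs.

From mathcomp Require Import all_boot all_order all_algebra zify.
Import GRing.Theory Num.Theory.
Set Implicit Arguments. Unset Strict Implicit. Unset Printing Implicit Defensive.

(* Contracting a spanning forest F2 of G[XL] merges exactly the vertices of XL that
   lie in a common component of G[XL] and is injective elsewhere, so every set C
   containing XL loses exactly |F2| vertices and keeps its number of components:
   rank(C) drops by |F2|, while the vertex covers containing XL correspond, because
   the deleted edges E(XL, XR) are covered by XL anyway.  Solutions never remove a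
   vertex of XL and always remove XR, so they correspond through the quotient map,
   with the budget |Ys| - |Xs| unchanged and k, d both shifted by |F2|.  In the
   contracted graph X is independent: edges inside XL were contracted, edges
   between XL and XR deleted, and XR was independent already. *)

Section Basics.
Variable T : finType.
Implicit Types (r : rel T) (F : {set {set T}}) (a b x y u z : T).

Lemma connect_invariant r (P : T -> Prop) a b :
  connect r a b -> P a -> (forall x y, r x y -> P x -> P y) -> P b.
Proof.
move=> /connectP [p pth ->] Pa step.
elim: p a pth Pa => [|z p IH] a //= /andP [raz pth] Pa.
exact: IH z pth (step _ _ raz Pa).
Qed.

Lemma connect_homo (T' : finType) r (r' : rel T') (f : T -> T') a b :
  (forall x y, r x y -> connect r' (f x) (f y)) ->
  connect r a b -> connect r' (f a) (f b).
Proof.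
move=> fr cab; apply: (connect_invariant (P := fun z => connect r' (f a) (f z))) cab _ _ => //.
by move=> x y rxy cax; apply: connect_trans cax (fr _ _ rxy).
Qed.

Lemma set2C a b : [set a; b] = [set b; a].
Proof. by apply/setP=> z; rewrite !inE orbC. Qed.

Lemma set2_inj a b x y :
  [set a; b] = [set x; y] -> (a = x /\ b = y) \/ (a = y /\ b = x).
Proof.
move=> E.
have: a \in [set x; y] by rewrite -E setU11.
have: b \in [set x; y] by rewrite -E !inE eqxx orbT.
have: x \in [set a; b] by rewrite E setU11.
have: y \in [set a; b] by rewrite E !inE eqxx orbT.
rewrite !inE => /orP [] /eqP ey /orP [] /eqP ex /orP [] /eqP eb /orP [] /eqP ea;
  subst; auto.
Qed.

Lemma erel_sym F : symmetric (erel F).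
Proof. by move=> x y; rewrite /erel set2C. Qed.

Lemma induced_sym r S : symmetric r -> symmetric (induced r S).
Proof. by move=> sr x y; rewrite /induced sr; case: (x \in S); case: (y \in S). Qed.

End Basics.

Lemma ncomp_imset (T T' : finType) (r : rel T) (r' : rel T') (S : {set T})
    (f : T -> T') :
  symmetric r ->
  {in S &, forall a b,
     connect (induced r' (f @: S)) (f a) (f b) = connect (induced r S) a b} ->
  ncomp r' (f @: S) = ncomp r S.
Proof.
move=> sr fconn; rewrite /ncomp.
have cs := sym_connect_sym (induced_sym S sr).
pose comp u := [set y in S | connect (induced r S) u y].
have -> : [set [set y in f @: S | connect (induced r' (f @: S)) x y] | x in f @: S]
        = [set f @: A | A : {set T} in [set comp u | u in S]].
  rewrite -!imset_comp; apply: eq_in_imset => u uS /=; apply/setP=> w.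
  apply/idP/imsetP => [|[z]].
    rewrite inE => /andP [/imsetP [y yS ->]]; rewrite fconn // => cuy.
    by exists y; rewrite // /comp inE yS.
  by rewrite /comp inE => /andP [zS cuz] ->; rewrite inE fconn // cuz imset_f.
rewrite card_in_imset // => A B /imsetP [a aS ->] /imsetP [b bS ->] /= EAB.
have : f a \in f @: comp b by rewrite -EAB imset_f // /comp inE aS connect0.
case/imsetP=> z; rewrite /comp inE => /andP [zS cbz] faz.
have caz : connect (induced r S) a z by rewrite -fconn // faz connect0.
have cab : connect (induced r S) a b by apply: connect_trans caz _; rewrite cs.
by apply/setP=> y; rewrite !inE (same_connect cs cab).
Qed.

Section Classes.
Variable T : finType.
Implicit Types (F : {set {set T}}) (x y u z : T).

Definition classes F := cclass F @: [set: T].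

Lemma mem_cclass F x y : (y \in cclass F x) = connect (erel F) x y.
Proof. by rewrite inE. Qed.

Lemma eq_cclass F x y : (cclass F x == cclass F y) = connect (erel F) x y.
Proof.
have cs := sym_connect_sym (erel_sym F).
apply/eqP/idP => [E|cxy]; first by rewrite -mem_cclass E mem_cclass connect0.
by apply/setP=> z; rewrite !mem_cclass (same_connect cs cxy).
Qed.

Lemma cclass0 x : cclass set0 x = [set x].
Proof.
apply/setP=> z; rewrite !inE; apply/idP/eqP => [cxz|->]; last exact: connect0.
by apply: (connect_invariant (P := fun z => z = x)) cxz _ _ => // a b; rewrite /erel inE.
Qed.

Lemma connect_setU1 F x y u z :
  connect (erel ([set x; y] |: F)) u z =
  [|| connect (erel F) u z,
      connect (erel F) u x && connect (erel F) y z |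
      connect (erel F) u y && connect (erel F) x z].
Proof.
set F' := [set x; y] |: F.
have cs := sym_connect_sym (erel_sym F).
have FF' : subrel (erel F) (connect (erel F')).
  by move=> a b Fab; apply: connect1; apply/setU1P; right.
have Fxy : connect (erel F') x y by apply: connect1; rewrite /erel setU11.
have Fyx : connect (erel F') y x by rewrite (sym_connect_sym (erel_sym F')).
apply/idP/idP => [cuz|].
  apply: (connect_invariant (P := fun z => is_true [|| connect (erel F) u z,
      connect (erel F) u x && connect (erel F) y z |
      connect (erel F) u y && connect (erel F) x z])) cuz _ _; first by rewrite connect0.
  move=> a b; rewrite /erel in_setU1.
  case/orP=> [/eqP /set2_inj [[-> ->]|[-> ->]] | /(@connect1 _ (erel F)) cab].
  - by case/or3P=> [cua|/andP [cua _]|/andP [cua _]]; rewrite cua connect0 ?andbT ?orbT.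
  - by case/or3P=> [cua|/andP [cua _]|/andP [cua _]]; rewrite cua connect0 ?andbT ?orbT.
  by case/or3P=> [cua|/andP [-> cua]|/andP [-> cua]]; rewrite (connect_trans cua cab) ?orbT.
have sub := connect_sub FF'.
case/or3P=> [/sub //|/andP [/sub cux /sub cyz]|/andP [/sub cuy /sub cxz]].
  exact: connect_trans cux (connect_trans Fxy cyz).
exact: connect_trans cuy (connect_trans Fyx cxz).
Qed.

Lemma cclass_setU1 F x y u :
  cclass ([set x; y] |: F) u =
  if connect (erel F) u x || connect (erel F) u y
  then cclass F x :|: cclass F y else cclass F u.
Proof.
have cs := sym_connect_sym (erel_sym F).
apply/setP=> z; rewrite mem_cclass connect_setU1.
case cux: (connect (erel F) u x) => /=.
  rewrite in_setU !mem_cclass (same_connect cs cux).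
  by case: (connect _ x z); case: (connect _ y z); case: (connect _ u y).
case cuy: (connect (erel F) u y) => /=; last by rewrite orbF inE.
by rewrite in_setU !mem_cclass (same_connect cs cuy) orbC.
Qed.

Lemma card_classes_setU1 F x y :
  ~~ connect (erel F) x y -> #|classes ([set x; y] |: F)|.+1 = #|classes F|.
Proof.
move=> ncxy; have cs := sym_connect_sym (erel_sym F).
set cx := cclass F x; set cy := cclass F y.
have cx_neq_cy : cx != cy by rewrite eq_cclass.
have cxyQ : [set cx; cy] \subset classes F.
  by apply/subsetP=> B; rewrite !inE => /orP [] /eqP ->; rewrite imset_f ?inE.
have other u : ~~ connect (erel F) u x -> ~~ connect (erel F) u y ->
    cclass F u \notin [set cx; cy].
  by move=> nux nuy; rewrite !inE !eq_cclass negb_or nux.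
have -> : classes ([set x; y] |: F) = (cx :|: cy) |: (classes F :\: [set cx; cy]).
  apply/setP=> B; rewrite in_setU1 in_setD; apply/imsetP/idP => [[u _ ->]|].
    rewrite cclass_setU1; case: ifP => [_|/norP [nux nuy]]; first by rewrite eqxx.
    by rewrite other // imset_f ?inE ?orbT.
  case/orP=> [/eqP ->|/andP [nB /imsetP [u _ EB]]].
    by exists x; rewrite ?inE // cclass_setU1 connect0.
  exists u; rewrite ?inE // cclass_setU1 EB; case: ifP => // /orP [] cu.
    by move: nB; rewrite EB !inE eq_cclass cu.
  by move: nB; rewrite EB !inE (eq_cclass F u y) cu orbT.
rewrite cardsU1 cardsD (setIidPr cxyQ) cards2 cx_neq_cy.
have -> : cx :|: cy \notin classes F :\: [set cx; cy].
  rewrite in_setD negb_and negbK; apply/orP; right; apply/imsetP=> [[u _ E]].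
  have cu z : z \in cx :|: cy -> connect (erel F) u z by rewrite E mem_cclass.
  have cux : connect (erel F) u x by apply: cu; rewrite inE mem_cclass connect0.
  have cuy : connect (erel F) u y by apply: cu; rewrite inE !mem_cclass connect0 orbT.
  by rewrite -(same_connect cs cux) cuy in ncxy.
by have := subset_leq_card cxyQ; rewrite cards2 cx_neq_cy; lia.
Qed.

End Classes.

Lemma connect_erelS (T : finType) (F F' : {set {set T}}) :
  F \subset F' -> subrel (connect (erel F)) (connect (erel F')).
Proof. by move=> sFF'; apply: connect_sub => a b Fab; apply/connect1/(subsetP sFF'). Qed.

Lemma forest_card (T : finType) (F : {set {set T}}) :
  (forall f, f \in F -> exists x y, f = [set x; y]) ->
  (forall x y, [set x; y] \in F -> ~~ connect (erel (F :\ [set x; y])) x y) ->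
  #|classes F| + #|F| = #|T|.
Proof.
move: {2}#|F| (erefl #|F|) => n; elim: n F => [|n IH] F cardF pairF acycF.
  move/cards0_eq: cardF => ->; rewrite cards0 addn0 /classes.
  under eq_imset do rewrite cclass0.
  by rewrite card_imset ?cardsT //; apply: set1_inj.
have [f fF] : exists f, f \in F by apply/set0Pn; rewrite -card_gt0 cardF.
have [x [y Ef]] := pairF f fF; subst f.
set F0 := F :\ [set x; y].
have cardF0 : #|F0| = n by move: cardF; rewrite (cardsD1 [set x; y]) fF => -[].
have pairF0 f : f \in F0 -> exists x y, f = [set x; y] by move=> /setD1P [_ /pairF].
have acycF0 a b : [set a; b] \in F0 -> ~~ connect (erel (F0 :\ [set a; b])) a b.
  move=> /setD1P [_ abF]; apply: contra (acycF a b abF).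
  by apply: connect_erelS; rewrite setDSS ?subD1set.
have := IH F0 cardF0 pairF0 acycF0.
have -> : F = [set x; y] |: F0 by rewrite setD1K.
rewrite -(card_classes_setU1 (acycF x y fF)) cardsU1 !inE eqxx /= cardF0.
by rewrite addSnnS.
Qed.

Section Contraction.
Variables (V : finType) (e : rel V) (A : {set V}) (F : {set {set V}}).
Hypothesis e_sym : symmetric e.
Hypothesis F_sub : F \subset edges (induced e A).
Implicit Types (r : rel V) (B S C : {set V}) (a b x y : V).
Local Notation q := (qv F).

Lemma qv_eqE a b : (q a == q b) = connect (erel F) a b.
Proof. by rewrite -val_eqE eq_cclass. Qed.

Lemma qv_surj (Q : qvert F) : exists x, Q = q x.
Proof. by case: Q => S /[dup] /existsP [x /eqP ES] SP; exists x; apply: val_inj. Qed.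

Lemma erel_induced a b : erel F a b -> [&& a \in A, b \in A & e a b].
Proof.
move=> /(subsetP F_sub) /imset2P [x y _]; rewrite !inE /induced => Axy.
by case/set2_inj=> -[-> ->] //; rewrite e_sym andbCA.
Qed.

Lemma connect_erel_notin a b : a \notin A -> connect (erel F) a b -> b = a.
Proof.
move=> aA cab; apply: (connect_invariant (P := fun z => z = a)) cab _ _ => // x y.
by move=> /erel_induced /andP [xA _] xa; move: aA; rewrite -xa xA.
Qed.

Lemma connect_erel_closed S a b :
  A \subset S -> a \in S -> connect (erel F) a b -> b \in S.
Proof.
move=> AS aS cab; case: (boolP (a \in A)) => aA; last by rewrite (connect_erel_notin aA cab).
apply: (subsetP AS); apply: (connect_invariant (P := fun z => is_true (z \in A))) cab _ _ => //.
by move=> x y /erel_induced /and3P [].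
Qed.

Lemma connect_erel_induced S a b :
  A \subset S -> connect (erel F) a b -> connect (induced e S) a b.
Proof.
move=> AS; apply: connect_sub => x y /erel_induced /and3P [xA yA exy].
by apply: connect1; rewrite /induced !(subsetP AS) // exy.
Qed.

Lemma qv_inj_notin a b : a \notin A -> q a = q b -> b = a.
Proof. by move=> aA /eqP; rewrite qv_eqE; apply: connect_erel_notin. Qed.

Lemma mem_imset_qv S a : A \subset S -> (q a \in q @: S) = (a \in S).
Proof.
move=> AS; apply/imsetP/idP => [[c cS /eqP]|aS]; last by exists a.
rewrite qv_eqE (sym_connect_sym (erel_sym F)); exact: connect_erel_closed.
Qed.

Lemma card_imset_qv_notin S : [disjoint S & A] -> #|q @: S| = #|S|.
Proof.
move=> SA; apply: card_in_imset => a b aS _ /(qv_inj_notin _) -> //.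
by rewrite (disjointFr SA aS).
Qed.

Lemma card_qvert : #|[set: qvert F]| = #|classes F|.
Proof.
rewrite -(card_imset _ val_inj); congr #|pred_of_set _|; apply/setP=> S.
apply/imsetP/imsetP => [[Q _ ->]|[x _ ->]]; last by exists (q x).
by have [x ->] := qv_surj Q; exists x.
Qed.

Lemma contr_qv r x y : q x != q y -> r x y -> contr r F (q x) (q y).
Proof.
move=> nxy rxy; rewrite /contr val_eqE nxy /=.
by apply/existsP; exists x; apply/existsP; exists y; rewrite !mem_cclass !connect0.
Qed.

Lemma contrP r P Q :
  contr r F P Q -> exists x y, [/\ P = q x, Q = q y, P != Q & r x y].
Proof.
have [u ->] := qv_surj P; have [v ->] := qv_surj Q.
case/andP=> nuv /existsP [x /existsP [y /and3P [ux vy rxy]]].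
by exists x, y; split=> //; apply/eqP; rewrite qv_eqE -mem_cclass.
Qed.

Lemma imset_qv_preimset (P : {set qvert F}) : q @: (q @^-1: P) = P.
Proof.
apply/setP=> Q; apply/imsetP/idP => [[x + ->]|QP]; first by rewrite inE.
by have [x EQ] := qv_surj Q; exists x; rewrite // inE -EQ.
Qed.

Lemma imset_qv_setD B S : [disjoint S & A] -> q @: (B :\: S) = q @: B :\: q @: S.
Proof.
move=> SA; apply/setP=> P; rewrite inE; apply/imsetP/andP => [[x /setDP [xB xS] ->]|].
  split; last exact: imset_f.
  apply/imsetP=> -[s sS /esym /(qv_inj_notin (negbT (disjointFr SA sS))) xs].
  by rewrite xs sS in xS.
case=> nPS /imsetP [x xB EP]; exists x => //; rewrite inE xB andbT.
by apply: contra nPS => xS; rewrite EP imset_f.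
Qed.

Lemma imset_qv_subset B S : [disjoint S & A] -> (q @: B \subset q @: S) = (B \subset S).
Proof.
move=> SA; apply/idP/idP => [/subsetP BS|]; last exact: imsetS.
apply/subsetP=> b /(imset_f q) /BS /imsetP [s sS /esym].
by move=> /(qv_inj_notin (negbT (disjointFr SA sS))) ->.
Qed.

Section DeletedEdges.
Variable r : rel V.
Hypothesis r_sub : subrel r e.

Lemma vertex_cover_contr C :
  irreflexive e -> (forall x y, e x y -> ~~ r x y -> (x \in A) || (y \in A)) ->
  A \subset C -> vertex_cover e C <-> vertex_cover (contr r F) (q @: C).
Proof.
move=> e_irr deleted AC; split=> [eC P Q /contrP [x [y [-> -> _ /r_sub /eC]]]|qC x y exy].
  by rewrite !mem_imset_qv.
have [rxy|/(deleted _ _ exy) /orP [] /(subsetP AC) -> //] := boolP (r x y); last first.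
  by rewrite orbT.
have [/eqP|nxy] := eqVneq (q x) (q y); last first.
  by have := qC _ _ (contr_qv nxy rxy); rewrite !mem_imset_qv.
rewrite qv_eqE; have [xA|xA /(connect_erel_notin xA) yx] := boolP (x \in A).
  by rewrite (subsetP AC).
by rewrite yx e_irr in exy.
Qed.

Lemma connect_contr C a b :
  A \subset C -> {in C &, forall x y, e x y -> r x y} -> a \in C -> b \in C ->
  connect (induced (contr r F) (q @: C)) (q a) (q b) = connect (induced e C) a b.
Proof.
move=> AC kept aC bC; apply/idP/idP => [cab|]; last first.
  apply: connect_homo => x y /and3P [xC yC exy].
  have [->|nxy] := eqVneq (q x) (q y); first exact: connect0.
  by apply: connect1; rewrite /induced !mem_imset_qv // xC yC contr_qv ?kept.
have lift x t : q t = q x -> connect (induced e C) x t.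
  by move=> /eqP; rewrite eq_sym qv_eqE; apply: connect_erel_induced.
pose reach Q := forall t, q t = Q -> connect (induced e C) a t.
suff reach_b : reach (q b) by apply: reach_b.
apply: (connect_invariant (P := reach)) cab _ _; first by move=> t /lift.
move=> P Q /and3P [PC QC /contrP [x [y [EP EQ _ rxy]]]] reachP t qt.
rewrite EP mem_imset_qv // in PC; rewrite EQ mem_imset_qv // in QC.
apply: connect_trans (reachP x (esym EP)) (connect_trans _ (lift y t _)); last by rewrite qt.
by apply: connect1; rewrite /induced PC QC r_sub.
Qed.

End DeletedEdges.

Hypothesis F_acyclic :
  forall x y, [set x; y] \in F -> ~~ connect (erel (F :\ [set x; y])) x y.

Lemma card_imset_qv C : A \subset C -> #|q @: C| + #|F| = #|C|.
Proof.
move=> AC.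
have qCT : q @: C :|: q @: (~: C) = [set: qvert F].
  by apply/setP=> Q; have [x ->] := qv_surj Q; rewrite -imsetU setUCr inE imset_f ?inE.
have qCD : [disjoint q @: C & q @: (~: C)].
  rewrite -setI_eq0; apply/eqP/setP=> Q; rewrite !inE; apply/andP=> -[/imsetP [x xC ->]].
  case/imsetP=> w; rewrite inE => wC /esym Ewx.
  have wA : w \notin A by apply: contra wC; apply/subsetP.
  by rewrite -(qv_inj_notin wA Ewx) xC in wC.
have pairF f : f \in F -> exists x y, f = [set x; y].
  by move=> /(subsetP F_sub) /imset2P [x y _ _ ->]; exists x, y.
have := cardsU (q @: C) (q @: (~: C)).
have CA : [disjoint ~: C & A] by rewrite disjoints_subset setCS.
rewrite qCT (disjoint_setI0 qCD) cards0 subn0 card_qvert (card_imset_qv_notin CA).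
by have := forest_card pairF F_acyclic; have := cardsC C; lia.
Qed.

Lemma rank_contr r C :
  subrel r e -> A \subset C -> {in C &, forall x y, e x y -> r x y} ->
  rank (contr r F) (q @: C) = (rank e C - #|F|%:Z)%R.
Proof.
move=> r_sub AC kept; rewrite /rank (ncomp_imset e_sym); last first.
  by move=> a b aC bC; apply: connect_contr.
by rewrite -(card_imset_qv AC); lia.
Qed.

End Contraction.

Lemma edel_sub (V : finType) (e : rel V) (F : {set {set V}}) : subrel (edel e F) e.
Proof. by move=> x y /andP []. Qed.

Section Reduction.
Variables (V : finType) (e : rel V) (X XL XR : {set V}) (F2 : {set {set V}}).
Hypotheses (e_sym : symmetric e) (e_irr : irreflexive e).
Hypotheses (XL_sub : XL \subset X) (XR_sub : XR \subset X).
Hypothesis XR_indep : independent e XR.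
Hypothesis X_edges : forall x y, x \in X -> y \in X -> e x y ->
  (x \in XL :|: XR) && (y \in XL :|: XR).
Hypothesis F2_forest : spanning_forest e XL F2.
Implicit Types (Xs Ys C : {set V}) (x y : V).

Local Notation F1 := [set [set x; y] | x in XL, y in XR & e x y].
Local Notation r := (edel e F1).
Local Notation q := (qv F2).
Local Notation G' := (contr r F2).

Let F2_sub : F2 \subset edges (induced e XL). Proof. by case: F2_forest. Qed.
Let F2_acyclic :
  forall x y, [set x; y] \in F2 -> ~~ connect (erel (F2 :\ [set x; y])) x y.
Proof. by case: F2_forest. Qed.

Lemma mem_F1 x y :
  [set x; y] \in F1 -> (x \in XL) && (y \in XR) || (y \in XL) && (x \in XR).
Proof.
case/imset2P=> a b aL; rewrite inE => /andP [bR _].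
by case/set2_inj=> -[-> ->]; rewrite aL bR ?orbT.
Qed.

Lemma deleted_edge x y : e x y -> ~~ r x y -> (x \in XL) || (y \in XL).
Proof.
by move=> exy; rewrite /edel exy negbK => /mem_F1 /orP [] /andP [->]; rewrite ?orbT.
Qed.

Lemma kept_edge C : [disjoint C & XR] -> {in C &, forall x y, e x y -> r x y}.
Proof.
move=> CR x y xC yC exy; rewrite /edel exy; apply: contraTN isT => /mem_F1.
by rewrite (disjointFr CR xC) (disjointFr CR yC) !andbF.
Qed.

Lemma independent_contr : independent G' (q @: X).
Proof.
move=> _ _ /imsetP [x xX ->] /imsetP [y yX ->]; apply/negP.
case/contrP=> u [v [/eqP Exu /eqP Eyv nxy /andP [euv]]].
rewrite !qv_eqE in Exu Eyv.
have uX := connect_erel_closed e_sym F2_sub XL_sub xX Exu.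
have vX := connect_erel_closed e_sym F2_sub XL_sub yX Eyv.
have F1uv a b : a \in XL -> b \in XR -> e a b -> [set a; b] \in F1.
  by move=> aL bR eab; apply/imset2P; exists a b; rewrite // inE bR.
case/andP: (X_edges uX vX euv); rewrite !inE => /orP [uL|uR] /orP [vL|vR].
- have cuv : connect (erel F2) u v.
    by case: F2_forest => _ _; apply=> //; apply: connect1; rewrite /induced uL vL.
  have cxy : connect (erel F2) x y.
    rewrite (sym_connect_sym (erel_sym F2)) in Eyv.
    exact: connect_trans Exu (connect_trans cuv Eyv).
  by rewrite qv_eqE cxy in nxy.
- by rewrite F1uv.
- by rewrite set2C F1uv // e_sym.
- by rewrite (negbTE (XR_indep uR vR)) in euv.
Qed.

Lemma feasible_imset_qv Xs Ys :
  Xs \subset X -> Ys \subset ~: X -> [disjoint XL & Xs] ->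
  [/\ q @: Xs \subset q @: X, q @: Ys \subset ~: (q @: X) & [disjoint q @: XL & q @: Xs]].
Proof.
move=> XsX YsX LXs; split; first exact: imsetS.
  apply/subsetP=> _ /imsetP [y /(subsetP YsX) yX ->].
  by rewrite inE (mem_imset_qv e_sym F2_sub) // -in_setC.
have XsL : [disjoint Xs & XL] by rewrite disjoint_sym.
rewrite -(setDidPl LXs) (imset_qv_setD e_sym F2_sub XL XsL).
by rewrite disjoints_subset setDE subsetIr.
Qed.

Lemma feasible_preimset (Xs' Ys' : {set qvert F2}) :
  Xs' \subset q @: X -> Ys' \subset ~: (q @: X) -> [disjoint q @: XL & Xs'] ->
  exists Xs Ys, [/\ Xs \subset X, Ys \subset ~: X, [disjoint XL & Xs],
                   Xs' = q @: Xs & Ys' = q @: Ys].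
Proof.
move=> XsX YsX LXs; exists (X :&: q @^-1: Xs'), (q @^-1: Ys'); split.
- exact: subsetIl.
- apply/subsetP=> y; rewrite !inE => /(subsetP YsX); rewrite inE.
  by apply: contra => /(imset_f q).
- rewrite -setI_eq0; apply/eqP/setP=> x; rewrite !inE; apply/and3P=> -[xL _ qx].
  by rewrite (disjointFr LXs (imset_f q xL)) in qx.
- apply/setP=> P; apply/idP/imsetP => [PXs|[x /setIP [_] + ->]]; last by rewrite inE.
  by have /imsetP [x xX EP] := subsetP XsX P PXs; exists x; rewrite // !inE xX -EP.
- by rewrite imset_qv_preimset.
Qed.

Lemma solution_contr (k d : int) Xs Ys :
  Xs \subset X -> Ys \subset ~: X -> [disjoint XL & Xs] ->
  let C := (X :\: Xs) :|: Ys in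
  let C' := (q @: X :\: q @: Xs) :|: q @: Ys in
  [/\ vertex_cover e C, (k <= rank e C)%R,
      (#|Ys|%:Z - #|Xs|%:Z <= k - d)%R & XR \subset Xs] <->
  [/\ vertex_cover G' C', (k - #|F2|%:Z <= rank G' C')%R,
      (#|q @: Ys|%:Z - #|q @: Xs|%:Z <= (k - #|F2|%:Z) - (d - #|F2|%:Z))%R &
      q @: XR \subset q @: Xs].
Proof.
move=> XsX YsX LXs C C'.
have XsL : [disjoint Xs & XL] by rewrite disjoint_sym.
have YsL : [disjoint Ys & XL].
  by rewrite disjoints_subset (subset_trans YsX) // setCS.
have LC : XL \subset C.
  by apply: subsetU; rewrite subsetD XL_sub LXs.
have -> : C' = q @: C by rewrite imsetU (imset_qv_setD e_sym F2_sub).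
have vcE := vertex_cover_contr e_sym F2_sub (@edel_sub _ e F1) e_irr deleted_edge LC.
have rankE : XR \subset Xs -> rank G' (q @: C) = (rank e C - #|F2|%:Z)%R.
  move=> RXs; apply: (rank_contr e_sym F2_sub F2_acyclic (@edel_sub _ e F1) LC).
  apply: kept_edge; rewrite disjoint_sym disjoints_subset; apply/subsetP=> x xR.
  rewrite /C !inE (subsetP RXs x xR) /=; apply/negP=> /(subsetP YsX).
  by rewrite inE (subsetP XR_sub x xR).
rewrite (imset_qv_subset e_sym F2_sub _ XsL).
rewrite (card_imset_qv_notin e_sym F2_sub XsL) (card_imset_qv_notin e_sym F2_sub YsL).
by split=> -[vc rk cd RXs]; split; try exact/vcE; rewrite ?rankE // in rk *; lia.
Qed.

End Reduction.

Theorem lemma14 (V : finType) (e : rel V) (k d : int) (X XL XR : {set V})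
    (F2 : {set {set V}}) :
  symmetric e -> irreflexive e ->
  vertex_cover e X -> XL \subset X -> XR \subset X -> [disjoint XL & XR] ->
  independent e XR ->
  (forall x y, x \in X -> y \in X -> e x y ->
     (x \in XL :|: XR) && (y \in XL :|: XR)) ->
  spanning_forest e XL F2 ->
  let F1 := [set [set x; y] | x in XL, y in XR & e x y] in
  let G' := contr (edel e F1) F2 in
  let k' := (k - #|F2|%:Z)%R in
  let d' := (d - #|F2|%:Z)%R in
  let X' := [set qv F2 x | x in X] in
  let XL' := [set qv F2 x | x in XL] in
  let XR' := [set qv F2 x | x in XR] in
  (yes_instance e k d X XL XR <-> yes_instance G' k' d' X' XL' XR')
  /\ independent G' X'.
Proof.
move=> e_sym e_irr _ XL_sub XR_sub _ XR_indep X_edges F2_forest.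
move=> F1 G' k' d' X' XL' XR'.
have transfer := solution_contr e_sym e_irr XL_sub XR_sub F2_forest k d.
split; last exact: independent_contr e_sym XL_sub XR_indep X_edges F2_forest.
split=> [[Xs [Ys [XsX [YsX [vc [rk [cd [LXs RXs]]]]]]]]|].
  have [vc' rk' cd' RXs'] := (transfer Xs Ys XsX YsX LXs).1 (And4 vc rk cd RXs).
  have [XsX' YsX' LXs'] := feasible_imset_qv e_sym XL_sub F2_forest XsX YsX LXs.
  by exists (qv F2 @: Xs), (qv F2 @: Ys).
case=> Xs' [Ys' [XsX' [YsX' [vc' [rk' [cd' [LXs' RXs']]]]]]].
have [Xs [Ys [XsX YsX LXs EXs EYs]]] := feasible_preimset XsX' YsX' LXs'.
subst Xs' Ys'.
have [vc rk cd RXs] := (transfer Xs Ys XsX YsX LXs).2 (And4 vc' rk' cd' RXs').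
by exists Xs, Ys.
Qed.
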